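(* Let $R$ be an Artinian multiplication ring. Then every multiplication $R$-module is an epimorphic image of the $R$-module $R$ (i.e., is cyclic).
   Context: All rings are commutative with $1$ and all modules are unital. A ring $R$ is a multiplication ring if whenever $I,J$ are ideals of $R$ with $J\subseteq I$, there is an ideal $I'$ of $R$ with $J=I'I$. An $R$-module $M$ is a multiplication module if every submodule of $M$ equals $IM$ for some ideal $I$ of $R$. *)

From HB Require Import structures.
From mathcomp Require Import all_boot all_order all_algebra.
Set Implicit Arguments. Unset Strict Implicit. Unset Printing Implicit Defensive.
Import GRing.Theory.
Local Open Scope ring_scope.

(* Subsets are represented as predicates [T -> Prop]; equality of subsets is
   extensional equality [same_set]. *)
Definition same_set (T : Type) (A B : T -> Prop) : Prop := forall x, A x <-> B x.
Definition sub_set (T : Type) (A B : T -> Prop) : Prop := forall x, A x -> B x.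

Definition is_ideal (R : comPzRingType) (I : R -> Prop) : Prop :=
  [/\ I 0, (forall x y, I x -> I y -> I (x + y)) & (forall r x, I x -> I (r * x))].

Definition ideal_mul (R : comPzRingType) (I J : R -> Prop) : R -> Prop :=
  fun x => exists n (a b : 'I_n -> R),
    (forall i, I (a i)) /\ (forall i, J (b i)) /\ x = \sum_(i < n) a i * b i.

Definition is_submodule (R : comPzRingType) (M : lmodType R) (N : M -> Prop) : Prop :=
  [/\ N 0, (forall x y, N x -> N y -> N (x + y)) & (forall r x, N x -> N (r *: x))].

Definition ideal_smul (R : comPzRingType) (M : lmodType R) (I : R -> Prop) : M -> Prop :=
  fun x => exists n (a : 'I_n -> R) (m : 'I_n -> M),
    (forall i, I (a i)) /\ x = \sum_(i < n) a i *: m i.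

Definition artinian_ring (R : comPzRingType) : Prop :=
  forall I : nat -> R -> Prop,
    (forall n, is_ideal (I n)) -> (forall n, sub_set (I n.+1) (I n)) ->
    exists N, forall n, (N <= n)%N -> same_set (I n) (I N).

Definition multiplication_ring (R : comPzRingType) : Prop :=
  forall I J : R -> Prop, is_ideal I -> is_ideal J -> sub_set J I ->
    exists I' : R -> Prop, is_ideal I' /\ same_set J (ideal_mul I' I).

Definition multiplication_module (R : comPzRingType) (M : lmodType R) : Prop :=
  forall N : M -> Prop, is_submodule N ->
    exists I : R -> Prop, is_ideal I /\ same_set N (@ideal_smul R M I).

From Stdlib Require Import Classical ClassicalEpsilon.
From HB Require Import structures.
From mathcomp Require Import all_boot all_order all_algebra.
From mathcomp Require Import ring.
Set Implicit Arguments.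
Unset Strict Implicit.

Import GRing.Theory.
Local Open Scope ring_scope.

(* Among the idempotents e such that e M is contained in a cyclic submodule,
   the descending chain condition on the ideals (1 - e) R yields a maximal one.
   If (1 - e) M were nonzero, the multiplication property would provide some
   j, not nilpotent on M, with j M inside a cyclic submodule of (1 - e) M.
   By Fitting's lemma in the Artinian ring, j R contains an idempotent f with
   f j^n = j^n; then f (1 - e) is an idempotent orthogonal to e that could be
   added to e, contradicting maximality.  Hence M = e M is cyclic. *)

Section ArtinianRing.
Variable R : comPzRingType.

Definition principal_ideal (a : R) : R -> Prop := fun z => exists r, z = a * r.

Lemma is_ideal_principal (a : R) : is_ideal (principal_ideal a).
Proof.
split; first by exists 0; rewrite mulr0.
  by move=> x y [r ->] [s ->]; exists (r + s); rewrite mulrDr.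
by move=> r x [s ->]; exists (r * s); rewrite mulrCA.
Qed.

Lemma artinian_minimal_ideal (F : (R -> Prop) -> Prop) :
  artinian_ring R -> (forall I, F I -> is_ideal I) -> (exists I, F I) ->
  exists I, F I /\ forall J, F J -> sub_set J I -> sub_set I J.
Proof.
move=> HA HF [I0 FI0]; apply: NNPP => Hno.
have next I : exists J, F I -> [/\ F J, sub_set J I & ~ sub_set I J].
  case: (classic (F I)) => FI; last by exists I.
  apply: NNPP => Hnext; apply: Hno; exists I; split=> // J FJ JI.
  by apply: NNPP => IJ; apply: Hnext; exists J.
pose g I := proj1_sig (constructive_indefinite_description _ (next I)).
have gP I : F I -> [/\ F (g I), sub_set (g I) I & ~ sub_set I (g I)].
  exact: proj2_sig (constructive_indefinite_description _ (next I)).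
pose chain n := iter n g I0.
have Fchain n : F (chain n) by elim: n => //= n IH; case: (gP _ IH).
have chain_desc n : sub_set (chain n.+1) (chain n) by case: (gP _ (Fchain n)).
have [N HN] := HA chain (fun n => HF _ (Fchain n)) chain_desc.
case: (gP _ (Fchain N)) => _ _; apply=> x.
by case: (HN N.+1 (leqnSn N) x).
Qed.

Lemma artinian_fitting_idempotent (j : R) : artinian_ring R ->
  exists f c n, [/\ f * f = f, f = j * c & f * j ^+ n = j ^+ n].
Proof.
move=> HA.
pose I k := principal_ideal (j ^+ k.+1).
have I_desc k : sub_set (I k.+1) (I k).
  by move=> z [r ->]; exists (j * r); rewrite exprS mulrCA mulrA.
have [N HN] := HA I (fun k => is_ideal_principal _) I_desc.
have [b Hb] : principal_ideal (j ^+ N.+2) (j ^+ N.+1).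
  by have [_] := HN N.+1 (leqnSn N) (j ^+ N.+1); apply; exists 1; rewrite mulr1.
set n := N.+1 in Hb *.
have jn_fixed k : j ^+ n * (j * b) ^+ k = j ^+ n.
  elim: k => [|k IH]; first by rewrite mulr1.
  by rewrite exprS !mulrA -exprSr -Hb.
have fjn : j ^+ n * b ^+ n * j ^+ n = j ^+ n.
  by rewrite -{3}(jn_fixed n) exprMn; ring.
exists (j ^+ n * b ^+ n), (j ^+ N * b ^+ n), n; split=> //.
- by rewrite mulrA fjn.
- by rewrite mulrA -exprS.
Qed.

End ArtinianRing.

Section Modules.
Variables (R : comPzRingType) (M : lmodType R).

Definition scaleM_sub_cyclic (a : R) (x : M) : Prop :=
  forall m : M, exists r, a *: m = r *: x.

Definition nil_on (s : R) : Prop := exists n, forall m : M, s ^+ n *: m = 0.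

Lemma nil_on0 : nil_on 0.
Proof. by exists 1%N => m; rewrite expr1 scale0r. Qed.

Lemma nil_onMr (s r : R) : nil_on s -> nil_on (s * r).
Proof. by case=> n Hn; exists n => m; rewrite exprMn mulrC -scalerA Hn scaler0. Qed.

Lemma nil_onD (s t : R) : nil_on s -> nil_on t -> nil_on (s + t).
Proof.
have kill (x : R) p k : (p <= k)%N -> (forall m : M, x ^+ p *: m = 0) ->
    forall m : M, x ^+ k *: m = 0.
  by move=> le H m; rewrite -(subnK le) exprD -scalerA H scaler0.
move=> [p Hs] [q Ht]; exists (p + q)%N => m.
rewrite exprDn scaler_suml big1 // => i _; rewrite -scalerMnl.
suff -> : (s ^+ (p + q - i) * t ^+ i) *: m = 0 by rewrite mul0rn.
case: (leqP q i) => hi; first by rewrite -scalerA (kill _ _ _ hi Ht) scaler0.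
have hp : (p <= p + q - i)%N by rewrite -addnBA ?leq_addr // ltnW.
by rewrite mulrC -scalerA (kill _ _ _ hp Hs) scaler0.
Qed.

Lemma nil_on_fixed_eq0 (s : R) (w : M) : nil_on s -> w = s *: w -> w = 0.
Proof.
move=> [p Hp] Hw.
have Hk k : w = s ^+ k *: w.
  by elim: k => [|k IH]; rewrite ?scale1r // exprSr -scalerA -Hw.
by rewrite (Hk p) Hp.
Qed.

Definition cyclic_submodule (u : M) : M -> Prop := fun z => exists r, z = r *: u.

Lemma is_submodule_cyclic (u : M) : is_submodule (cyclic_submodule u).
Proof.
split; first by exists 0; rewrite scale0r.
  by move=> x y [r ->] [s ->]; exists (r + s); rewrite scalerDl.
by move=> r x [s ->]; exists (r * s); rewrite scalerA.
Qed.

Lemma ideal_smul_scale (I : R -> Prop) a (m : M) : I a -> ideal_smul I (a *: m).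
Proof.
by move=> Ia; exists 1%N, (fun _ => a), (fun _ => m); rewrite big_ord1.
Qed.

(* Write R z = I M and expand z as an element of I M. *)
Lemma multiplication_cyclic_decomp (z : M) : multiplication_module M ->
  exists n (b : 'I_n -> R) (v : 'I_n -> M),
    (forall l, scaleM_sub_cyclic (b l) z) /\ z = \sum_(l < n) b l *: v l.
Proof.
move=> HM; have [I [_ HI]] := HM _ (is_submodule_cyclic z).
have [n [b [v [Hb Hz]]]] : ideal_smul I z by apply/HI; exists 1; rewrite scale1r.
exists n, b, v; split=> // l m; apply/HI; exact: ideal_smul_scale.
Qed.

(* Otherwise w := c m1 = c w expands, through R w = I M and then R (c m_i) = J_i M,
   as s w with s nilpotent on M, forcing w = 0. *)
Lemma multiplication_nonnil_cyclic (c : R) (m1 : M) : multiplication_module M ->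
  c * c = c -> c *: m1 <> 0 ->
  exists m0 j, scaleM_sub_cyclic j (c *: m0) /\ ~ nil_on j.
Proof.
move=> HM cc Hm1; apply: NNPP => Hno.
have nil_j m0 j : scaleM_sub_cyclic j (c *: m0) -> nil_on j.
  by move=> Hj; apply: NNPP => nj; apply: Hno; exists m0, j.
set w := c *: m1.
pose Q z := exists s, nil_on s /\ z = s *: w.
have Q_sum n (F : 'I_n -> M) : (forall i, Q (F i)) -> Q (\sum_(i < n) F i).
  move=> HF; apply: big_ind => //.
    by exists 0; split; [exact: nil_on0 | rewrite scale0r].
  move=> _ _ [s [Hs ->]] [t [Ht ->]].
  by exists (s + t); split; [exact: nil_onD | rewrite scalerDl].
have Q_scale a m : scaleM_sub_cyclic a w -> Q (a *: (c *: m)).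
  move=> Ha; have [n [b [v [Hb ->]]]] := multiplication_cyclic_decomp (c *: m) HM.
  rewrite scaler_sumr; apply: Q_sum => l; rewrite scalerA mulrC -scalerA.
  have [r ->] := Ha (v l); rewrite scalerA; exists (b l * r); split=> //.
  exact/nil_onMr/(nil_j m).
have [n [a [m [Ha Hw]]]] := multiplication_cyclic_decomp w HM.
have [s [Hs]] : Q w.
  have -> : w = c *: w by rewrite /w scalerA cc.
  rewrite Hw scaler_sumr; apply: Q_sum => i.
  by rewrite scalerA mulrC -scalerA; apply: Q_scale.
by move=> Hsw; apply: Hm1; apply: nil_on_fixed_eq0 Hs Hsw.
Qed.

Lemma scaleM_sub_cyclicD (e g : R) (x y : M) :
  e * e = e -> g * g = g -> e * g = 0 ->
  scaleM_sub_cyclic e x -> scaleM_sub_cyclic g y ->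
  scaleM_sub_cyclic (e + g) (e *: x + g *: y).
Proof.
move=> ee gg eg Hx Hy m.
have [r Hr] := Hx m; have [s Hs] := Hy m.
exists (r * e + s * g).
have eem : e *: m = e *: (e *: m) by rewrite scalerA ee.
have ggm : g *: m = g *: (g *: m) by rewrite scalerA gg.
rewrite [(e + g) *: m]scalerDl eem ggm Hr Hs scalerDr !scalerA.
by congr (_ *: _ + _ *: _); ring: ee gg eg.
Qed.

Lemma artinian_maximal_cyclic_idempotent : artinian_ring R ->
  exists e x, [/\ e * e = e, scaleM_sub_cyclic e x &
    forall g y, g * g = g -> e * g = 0 -> scaleM_sub_cyclic g y -> g = 0].
Proof.
move=> HA.
pose F I := exists e x, [/\ e * e = e, scaleM_sub_cyclic e x &
  same_set I (principal_ideal (1 - e))].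
have F_ideal I : F I -> is_ideal I.
  move=> [e [x [_ _ HI]]]; case: (is_ideal_principal (1 - e)) => H0 HD HZ.
  split; first exact/HI.
    by move=> a b /HI Ha /HI Hb; apply/HI; apply: HD.
  by move=> r a /HI Ha; apply/HI; apply: HZ.
have F0 : exists I, F I.
  exists (principal_ideal 1), 0, 0; split; first by rewrite mulr0.
    by move=> m; exists 0; rewrite !scale0r.
  by rewrite subr0.
have [I [[e [x [ee ex HI]]] Imin]] := artinian_minimal_ideal HA F_ideal F0.
exists e, x; split=> // g y gg eg gy.
have Fg : F (principal_ideal (1 - (e + g))).
  exists (e + g), (e *: x + g *: y); split=> //.
  - by ring: ee gg eg.
  - exact: scaleM_sub_cyclicD.
have sub : sub_set (principal_ideal (1 - (e + g))) I.
  by move=> z [r ->]; apply/HI; exists ((1 - g) * r); ring: eg.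
have [t Ht] : principal_ideal (1 - (e + g)) (1 - e).
  by apply: (Imin _ Fg sub); apply/HI; exists 1; rewrite mulr1.
have -> : g = g * (1 - e) by ring: eg.
by rewrite Ht; ring: gg eg.
Qed.

Lemma maximal_cyclic_idempotent_complement0 (e : R) : artinian_ring R ->
  multiplication_module M -> e * e = e ->
  (forall g y, g * g = g -> e * g = 0 -> scaleM_sub_cyclic g y -> g = 0) ->
  forall m : M, (1 - e) *: m = 0.
Proof.
move=> HA HM ee emax m1; apply: NNPP => Hm1.
have ce : (1 - e) * (1 - e) = 1 - e by ring: ee.
have [m0 [j [jw jnil]]] := multiplication_nonnil_cyclic HM ce Hm1.
set w := (1 - e) *: m0 in jw.
have [f [c [n [ff fjc fjn]]]] := artinian_fitting_idempotent j HA.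
have fw : scaleM_sub_cyclic f w by move=> m; rewrite fjc -scalerA; apply: jw.
have g0 : f * (1 - e) = 0.
  apply: (emax _ w); [by ring: ff ee | by ring: ee |].
  by move=> m; rewrite -scalerA; apply: fw.
apply: jnil; exists n => m; have [s Hs] := fw (j ^+ n *: m).
rewrite -fjn -scalerA -ff -scalerA Hs /w !scalerA.
by rewrite mulrAC g0 mul0r scale0r.
Qed.

End Modules.

Theorem corollary2p5 (R : comPzRingType) (M : lmodType R) :
  artinian_ring R -> multiplication_ring R -> multiplication_module M ->
  exists f : R -> M,
    [/\ (forall x y, f (x + y) = f x + f y),
        (forall r x, f (r * x) = r *: f x) &
        (forall m : M, exists x, f x = m)].
Proof.
move=> HA _ HM.
have [e [x [ee ex emax]]] := artinian_maximal_cyclic_idempotent M HA.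
have eM_full := maximal_cyclic_idempotent_complement0 HA HM ee emax.
exists (fun r => r *: x); split.
- by move=> a b; rewrite scalerDl.
- by move=> r a; rewrite scalerA.
- move=> m; have [r Hr] := ex m; exists r.
  by rewrite -Hr -{2}(scale1r m) -(subrK e 1) scalerDl eM_full add0r.
Qed.
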